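(* Let $\Delta t>0$, let $L\in\mathbb{R}^{3\times 3}$ be symmetric positive definite, let $\mathcal{Z}\subset\mathfrak{so}(3)$ be a finite set, let $\Psi:\mathfrak{so}(3)\times\mathfrak{so}(3)\to SO(3)$ be a given map, and let $A_{k+1}\in\mathfrak{so}(3)$ and $Y_{k+1}\in SO(3)$ be given. Suppose $V_k:SO(3)\to\mathbb{R}$ has the min-plus affine form $$V_k(R)=\min_{\lambda\in\Lambda_k}\Big[c_\lambda-\tfrac12\,\mathrm{tr}(M_\lambda R)\Big],$$ where $\Lambda_k$ is a finite index set, $c_\lambda\in\mathbb{R}$ and $M_\lambda\in\mathbb{R}^{3\times3}$. Define $V_{k+1}:SO(3)\to\mathbb{R}$ by the one-step dynamic programming recursion $$V_{k+1}(R)=\min_{z\in\mathcal{Z}}\Big\{\tfrac12\,\mathrm{tr}(z^Tz)\,\Delta t+\tfrac14\,\phi_{L^{-1}}(R^{-1}Y_{k+1})\,\Delta t+V_k\big(R\,\Psi(A_{k+1},z)\big)\Big\},$$ where $\phi_M(Q):=\mathrm{tr}\big[(Q-I)^TM(Q-I)\big]$. Then $V_{k+1}$ has the same min-plus affine form: $$V_{k+1}(R)=\min_{(\lambda,z)\in\Lambda_k\times\mathcal{Z}}\Big[c_{(\lambda,z)}-\tfrac12\,\mathrm{tr}\big(M_{(\lambda,z)}R\big)\Big]\quad\text{for all }R\in SO(3),$$ with $$c_{(\lambda,z)}=c_\lambda+\tfrac12\,\mathrm{tr}(z^Tz)\,\Delta t+\tfrac12\,\mathrm{tr}(L^{-1})\,\Delta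 t,\qquad M_{(\lambda,z)}=(L^{-1})^TY_{k+1}^T\,\Delta t+\Psi(A_{k+1},z)\,M_\lambda .$$
   Context: $SO(3)$ is the group of $3\times3$ real orthogonal matrices with determinant $1$ and $\mathfrak{so}(3)$ the space of $3\times3$ real skew-symmetric matrices. This result concerns deterministic (minimum-energy) attitude filtering for the system $\dot R=R(A+z)$, $Y=R\epsilon$ with $\epsilon\in SO(3)$, where the value function is propagated backward in time by dynamic programming over a finite discretized disturbance set $\mathcal{Z}$, and $\Psi(A,z)$ denotes the (discretized) backward state-transition factor, so that the previous state is $R\,\Psi(A_{k+1},z)$. The min-plus notation $\bigoplus$/$\otimes$ stands for $\min$/$+$. *)

From HB Require Import structures.
From mathcomp Require Import all_boot all_order all_algebra.
Set Implicit Arguments. Unset Strict Implicit. Unset Printing Implicit Defensive.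
Import Order.TTheory GRing.Theory Num.Theory.
Local Open Scope ring_scope.

Definition SO3 {R : realFieldType} (Q : 'M[R]_3) : Prop :=
  Q^T *m Q = 1%:M /\ \det Q = 1.

Definition so3 {R : realFieldType} (A : 'M[R]_3) : Prop := A^T = - A.

Definition sym_posdef {R : realFieldType} (L : 'M[R]_3) : Prop :=
  L^T = L /\ forall v : 'rV[R]_3, v != 0 -> 0 < (v *m L *m v^T) 0 0.

(* Minimum of a list of reals (the list is always nonempty where used;
   the value 0 for the empty list is an unused convention). *)
Definition seqmin {R : realFieldType} (s : seq R) : R :=
  match s with [::] => 0 | x :: s' => foldr Num.min x s' end.

Definition minover {R : realFieldType} {T : Type} (s : seq T) (f : T -> R) : R :=
  seqmin (map f s).

Definition phi {R : realFieldType} (M Q : 'M[R]_3) : R :=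
  \tr ((Q - 1%:M)^T *m M *m (Q - 1%:M)).

From HB Require Import structures.
From mathcomp Require Import all_boot all_order all_algebra ring.
Import Order.TTheory GRing.Theory Num.Theory.
Local Open Scope ring_scope.

(* For a rotation R, the attitude error R^-1 Y is again a rotation, so the
   quadratic output cost phi_{L^-1}(R^-1 Y) is affine in R: 2 tr L^-1 minus
   twice a linear trace functional.  Hence each stage cost, for fixed z,
   only shifts the constants c and adds the fixed matrix dt L^-T Y^T to the
   matrices M, while composing with Psi(A, z) multiplies them.  The outer
   minimum over z of the inner minimum over lambda then collapses into a
   single minimum over the pairs (lambda, z). *)

Section MinOver.
Variable R : realFieldType.

Lemma foldr_min_le (x : R) s y : y \in x :: s -> foldr Num.min x s <= y.
Proof.
elim: s y => [|a s IHs] y /=; first by rewrite inE => /eqP ->.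
rewrite !inE ge_min => /orP[/eqP->|/orP[/eqP->|ys]].
- by rewrite (IHs x) ?orbT // inE eqxx.
- by rewrite lexx.
- by rewrite (IHs y) ?orbT // inE ys orbT.
Qed.

Lemma foldr_min_mem (x : R) s : foldr Num.min x s \in x :: s.
Proof.
elim: s => [|a s IHs] /=; first by rewrite inE.
rewrite /Num.min; case: ifP => _; first by rewrite !inE eqxx orbT.
by move: IHs; rewrite !inE => /orP[->|->]; rewrite ?orbT.
Qed.

Variable T : eqType.
Implicit Types (s : seq T) (f g : T -> R).

Lemma minover_le {s} f {x} : x \in s -> minover s f <= f x.
Proof.
move=> xs; rewrite /minover /seqmin.
case fs: (map f s) => [|a t]; first by move: (map_f f xs); rewrite fs.
by apply: foldr_min_le; rewrite -fs; exact: map_f.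
Qed.

Lemma minover_mem {s} f : s != [::] -> exists2 x, x \in s & minover s f = f x.
Proof.
move=> s0; rewrite /minover /seqmin.
case fs: (map f s) => [|a t]; first by move: s0; case: s fs.
by have := foldr_min_mem a t; rewrite -fs => /mapP[x xs ->]; exists x.
Qed.

Lemma eq_in_minover s f g : {in s, f =1 g} -> minover s f = minover s g.
Proof. by move=> fg; rewrite /minover; congr seqmin; exact/eq_in_map. Qed.

Lemma minover_homo (h : R -> R) s f :
  {homo h : x y / x <= y} -> s != [::] ->
  minover s (fun x => h (f x)) = h (minover s f).
Proof.
move=> h_homo s0; apply/le_anti/andP; split.
- have [x xs ->] := minover_mem f s0.
  exact: minover_le _ xs.
- have [x xs ->] := minover_mem (fun x => h (f x)) s0.
  exact/h_homo/minover_le.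
Qed.

Lemma minover_addl s f a :
  s != [::] -> minover s (fun x => a + f x) = a + minover s f.
Proof. by apply: minover_homo => x y; rewrite lerD2l. Qed.

End MinOver.

Arguments minover_le {R T s} f {x}.
Arguments minover_mem {R T s} f.

Lemma minover_allpairs (R : realFieldType) (T U : eqType)
    (s : seq T) (t : seq U) (G : T * U -> R) :
  s != [::] -> t != [::] ->
  minover t (fun y => minover s (fun x => G (x, y)))
  = minover [seq (x, y) | x <- s, y <- t] G.
Proof.
move=> s0 t0; apply/le_anti/andP; split.
- have st0 : [seq (x, y) | x <- s, y <- t] != [::].
    by rewrite -size_eq0 size_allpairs muln_eq0 !size_eq0 negb_or s0 t0.
  have [[x y] /allpairsP[[x' y'] [/= xs yt [-> ->]]] ->] := minover_mem G st0.
  exact: le_trans (minover_le _ yt) (minover_le _ xs).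
- have [y yt ->] := minover_mem (fun y => minover s (fun x => G (x, y))) t0.
  have [x xs ->] := minover_mem (fun x => G (x, y)) s0.
  exact: minover_le _ (allpairs_f pair xs yt).
Qed.

Section Rotations.
Variable R : realFieldType.
Implicit Types P Q Y : 'M[R]_3.

Lemma SO3_mulmxtr Q : SO3 Q -> Q *m Q^T = 1%:M.
Proof. by case=> QTQ _; exact: mulmx1C. Qed.

Lemma SO3_invmx Q : SO3 Q -> invmx Q = Q^T.
Proof.
move=> SO3Q; have Qunit : Q \in unitmx by rewrite unitmxE SO3Q.2 unitr1.
by rewrite -[invmx Q]mulmx1 -(SO3_mulmxtr _ SO3Q) mulmxA mulVmx // mul1mx.
Qed.

Lemma SO3_mul P Q : SO3 P -> SO3 Q -> SO3 (P *m Q).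
Proof.
move=> [PTP detP] [QTQ detQ]; split; last by rewrite det_mulmx detP detQ mulr1.
by rewrite trmx_mul mulmxA -(mulmxA Q^T) PTP mulmx1.
Qed.

Lemma phi_orthogonal (Li P : 'M[R]_3) :
  Li^T = Li -> P *m P^T = 1%:M -> phi Li P = 2 * \tr Li - 2 * \tr (Li *m P).
Proof.
move=> LiT PPT.
have trPLiP : \tr (P^T *m Li *m P) = \tr Li.
  by rewrite mxtrace_mulC mulmxA PPT mul1mx.
have trPLi : \tr (P^T *m Li) = \tr (Li *m P).
  by rewrite -mxtrace_tr trmx_mul trmxK LiT.
rewrite /phi mulmxBr mulmx1 [(P - 1%:M)^T]linearB /= trmx1.
rewrite !mulmxBl !mul1mx !linearB /=.
by rewrite trPLiP trPLi; ring.
Qed.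

Lemma phi_rotation_error (Li Q Y : 'M[R]_3) :
  Li^T = Li -> SO3 Q -> SO3 Y ->
  phi Li (invmx Q *m Y) = 2 * \tr Li - 2 * \tr (Li *m Y^T *m Q).
Proof.
move=> LiT SO3Q SO3Y; rewrite SO3_invmx // phi_orthogonal //.
  congr (_ - 2 * _).
  by rewrite -mxtrace_tr !trmx_mul trmxK LiT mxtrace_mulC mulmxA.
by rewrite trmx_mul trmxK mulmxA -(mulmxA Q^T) SO3_mulmxtr // mulmx1 SO3Q.1.
Qed.

Lemma stage_cost_affine (Li Y Q P Ml : 'M[R]_3) (cl a dt : R) :
  Li^T = Li -> SO3 Q -> SO3 Y ->
  a + 4^-1 * phi Li (invmx Q *m Y) * dt + (cl - 2^-1 * \tr (Ml *m (Q *m P)))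
  = (cl + a + 2^-1 * \tr Li * dt)
    - 2^-1 * \tr ((dt *: (Li^T *m Y^T) + P *m Ml) *m Q).
Proof.
move=> LiT SO3Q SO3Y; rewrite phi_rotation_error // LiT.
rewrite mulmxDl mxtraceD -scalemxAl mxtraceZ mulmxA.
rewrite [\tr (Ml *m Q *m P)]mxtrace_mulC mulmxA.
move: (\tr Li) (\tr (Li *m Y^T *m Q)) (\tr (P *m Ml *m Q)) => trLi trLiYQ trPMQ.
by field.
Qed.

End Rotations.

Theorem mainTheorem1 (R : realFieldType) (dt : R) (L : 'M[R]_3)
  (Z : seq 'M[R]_3) (Psi : 'M[R]_3 -> 'M[R]_3 -> 'M[R]_3)
  (A1 Y1 : 'M[R]_3)
  (Lam : finType) (c : Lam -> R) (M : Lam -> 'M[R]_3)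
  (Vk Vk1 : 'M[R]_3 -> R) :
  0 < dt ->
  sym_posdef L ->
  uniq Z -> Z != [::] -> (forall z, z \in Z -> so3 z) ->
  (forall A z, so3 A -> so3 z -> SO3 (Psi A z)) ->
  so3 A1 -> SO3 Y1 ->
  (0 < #|Lam|)%N ->
  (forall Q, SO3 Q ->
     Vk Q = minover (enum Lam) (fun l => c l - 2^-1 * \tr (M l *m Q))) ->
  (forall Q, SO3 Q ->
     Vk1 Q = minover Z (fun z =>
        2^-1 * \tr (z^T *m z) * dt
        + 4^-1 * phi (invmx L) (invmx Q *m Y1) * dt
        + Vk (Q *m Psi A1 z))) ->
  forall Q, SO3 Q ->
    Vk1 Q = minover [seq (l, z) | l <- enum Lam, z <- Z]
      (fun lz : Lam * 'M[R]_3 =>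
         (c lz.1 + 2^-1 * \tr (lz.2^T *m lz.2) * dt
                 + 2^-1 * \tr (invmx L) * dt)
         - 2^-1 * \tr ((dt *: ((invmx L)^T *m Y1^T)
                        + Psi A1 lz.2 *m M lz.1) *m Q)).
Proof.
move=> _ [LT _] _ Z0 Zso Psiso A1so SO3Y1 Lam0 Vk_def Vk1_def Q SO3Q.
have LiT : (invmx L)^T = invmx L by rewrite trmx_inv LT.
have Lam_ne : enum Lam != [::] by rewrite -size_eq0 -cardE -lt0n.
rewrite Vk1_def // -minover_allpairs //; apply: eq_in_minover => z Zz /=.
rewrite Vk_def; last exact/SO3_mul/Psiso/Zso.
rewrite -minover_addl //; apply: eq_in_minover => l _ /=.
by rewrite -LiT stage_cost_affine ?LiT.
Qed.
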